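(* For all problems $f,g$: if $f\times\mathsf C_2\le_W\overline g$, then $f\le_W g$. Likewise, if $f\times\mathsf C_2\le_{sW}\overline g$, then $f\le_{sW}g$.
   Context: A problem $f:\subseteq X\rightrightarrows Y$ between represented spaces (sets with surjective partial $\delta:\subseteq\mathbb N^\mathbb N\to X$) is a partial multi-valued map with nonempty values on its domain; $F\vdash f$ means $\delta_YF(p)\in f(\delta_X(p))$ whenever $\delta_X(p)\in\mathrm{dom}(f)$. $f\le_W g$ iff there are computable partial $H,K$ with $H\langle\mathrm{id},GK\rangle\vdash f$ for all $G\vdash g$; $f\le_{sW}g$ iff there are computable $H,K$ with $HGK\vdash f$ for all $G\vdash g$. The product $f\times g$ maps $(x,u)\mapsto f(x)\times g(u)$ on $\mathrm{dom}(f)\times\mathrm{dom}(g)$. $\mathsf C_2:\subseteq\mathcal A_-(\{0,1\})\rightrightarrows\{0,1\}$, $A\mapsto A$ on nonempty $A$, where subsets of $\{0,1\}$ are given by negative information (an enumeration of the complement). For $p\in\mathbb{N}^\mathbb{N}$, $p-1$ is the concatenation of $p(0)-1,p(1)-1,\dots$ with $0-1$ the empty word; the completion of $(X,\delta_X)$ is $\overline X=X\cup\{\bot\}$ with $\delta_{\overline X}(p)=\delta_X(p-1)$ if $p-1$ is an infinite sequence in $\mathrm{dom}(\delta_X)$, $\bot$ otherwise; $\overline g:\overline U\rightrightarrows\overline V$ equals $g$ on $\mathrm{dom}(g)$ and $\overline V$ elsewhere. *)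

From Stdlib Require Import Arith List.
Import ListNotations.

Definition baire := nat -> nat.

Definition bpair (p q : baire) : baire :=
  fun n => if Nat.even n then p (Nat.div2 n) else q (Nat.div2 n).
Definition bfst (p : baire) : baire := fun n => p (2 * n).
Definition bsnd (p : baire) : baire := fun n => p (2 * n + 1).

(** Partial recursive (mu-recursive) functions on nat; arguments are lists,
    missing arguments default to 0. *)
Inductive recf : Type :=
| RZero
| RSucc
| RProj (i : nat)
| RComp (h : recf) (gs : list recf)
| RPrec (b s : recf)
| RMu (f : recf).

Inductive eval : recf -> list nat -> nat -> Prop :=
| ev_zero a : eval RZero a 0
| ev_succ a : eval RSucc a (S (hd 0 a))
| ev_proj i a : eval (RProj i) a (nth i a 0)
| ev_comp h gs a bs v : evals gs a bs -> eval h bs v -> eval (RComp h gs) a v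
| ev_prec0 b s a v : eval b a v -> eval (RPrec b s) (0 :: a) v
| ev_precS b s n a u v :
    eval (RPrec b s) (n :: a) u -> eval s (n :: u :: a) v -> eval (RPrec b s) (S n :: a) v
| ev_mu f a n :
    eval f (n :: a) 0 ->
    (forall m, m < n -> exists w, eval f (m :: a) (S w)) ->
    eval (RMu f) a n
with evals : list recf -> list nat -> list nat -> Prop :=
| evs_nil a : evals nil a nil
| evs_cons g gs a v vs : eval g a v -> evals gs a vs -> evals (g :: gs) a (v :: vs).

Definition cpair (x y : nat) : nat := (x + y) * (x + y + 1) / 2 + y.
Fixpoint code (l : list nat) : nat :=
  match l with nil => 0 | x :: l' => S (cpair x (code l')) end.
Definition prefix (p : baire) (k : nat) : list nat := map p (seq 0 k).

Definition pfun (F : baire -> baire -> Prop) : Prop :=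
  forall p q q', F p q -> F p q' -> q = q'.

(** Computable partial function F :⊆ N^N -> N^N: a machine [e] which, given an
    output index n and (the code of) a finite prefix of the input, either asks
    for more input (answer 0) or outputs the n-th output digit v (answer S v);
    on every p in dom F it answers for each n on some prefix, and all its
    answers are correct. (Equivalent to the usual Type-2 machine notion.) *)
Definition computable (F : baire -> baire -> Prop) : Prop :=
  exists e : recf, forall p q, F p q -> forall n,
    (exists k, eval e [n; code (prefix p k)] (S (q n))) /\
    (forall k v, eval e [n; code (prefix p k)] (S v) -> v = q n).

Record space := Space { carrier : Type; rep : baire -> carrier -> Prop }.
Arguments rep {_}.

Definition represented (X : space) : Prop :=
  (forall p (x x' : carrier X), rep p x -> rep p x' -> x = x') /\
  (forall x : carrier X, exists p, rep p x).

Definition problem (X Y : space) := carrier X -> carrier Y -> Prop.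
Definition pdom {X Y : space} (f : problem X Y) (x : carrier X) : Prop :=
  exists y, f x y.

Definition realizes {X Y : space} (f : problem X Y) (F : baire -> baire -> Prop) : Prop :=
  forall p x, rep p x -> pdom f x ->
    exists q y, F p q /\ rep q y /\ f x y.

Definition W_le {X Y U V : space} (f : problem X Y) (g : problem U V) : Prop :=
  exists H K, computable H /\ computable K /\
    forall G, pfun G -> realizes g G ->
      realizes f (fun p q => exists r s, K p r /\ G r s /\ H (bpair p s) q).

Definition sW_le {X Y U V : space} (f : problem X Y) (g : problem U V) : Prop :=
  exists H K, computable H /\ computable K /\
    forall G, pfun G -> realizes g G ->
      realizes f (fun p q => exists r s, K p r /\ G r s /\ H s q).

Definition prod_space (X Y : space) : space :=
  Space (carrier X * carrier Y)
        (fun p xy => rep (bfst p) (fst xy) /\ rep (bsnd p) (snd xy)).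

Definition prob_prod {X Y X' Y' : space} (f : problem X Y) (g : problem X' Y')
  : problem (prod_space X X') (prod_space Y Y') :=
  fun xu yv => f (fst xu) (fst yv) /\ g (snd xu) (snd yv).

(** A_-({0,1}): a subset A of {0,1} is the pair (0 ∈ A, 1 ∈ A); p names A iff
    the numbers n+1 occurring in p are exactly the n ∈ {0,1} with n ∉ A. *)
Definition Aminus2 : space :=
  Space (bool * bool)
        (fun p A => (fst A = true <-> ~ exists k, p k = 1) /\
                    (snd A = true <-> ~ exists k, p k = 2)).

Definition two_space : space :=
  Space bool (fun p b => p 0 = (if b then 1 else 0)).

Definition C2 : problem Aminus2 two_space :=
  fun A b => (if b then snd A else fst A) = true.

(** p - 1 : count of nonzero entries before position k, and
    [minus1 p q] := "p-1 is the infinite sequence q". *)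
Fixpoint cnt (p : baire) (k : nat) : nat :=
  match k with
  | 0 => 0
  | S k' => cnt p k' + (if p k' =? 0 then 0 else 1)
  end.
Definition minus1 (p q : baire) : Prop :=
  forall n, exists k, p k = S (q n) /\ cnt p k = n.

(** Completion: carrier X ∪ {⊥} = option X *)
Definition completion (X : space) : space :=
  Space (option (carrier X))
        (fun p o => match o with
                    | Some x => exists q, minus1 p q /\ rep q x
                    | None => ~ exists q (x : carrier X), minus1 p q /\ rep q x
                    end).

Definition compl_prob {U V : space} (g : problem U V)
  : problem (completion U) (completion V) :=
  fun u v => match u with
             | Some x => pdom g x -> exists y, v = Some y /\ g x y
             | None => True
             end.

From Stdlib Require Import Arith List Lia Classical FunctionalExtensionality.
Import ListNotations.
Open Scope bool_scope.

(* Feed a reduction (H0, K0) of [f x C2] to the completion of [g] the [C2]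
   instance {0,1}, named by the sequence [zero], and a realizer of the completed
   problem that answers bottom (again [zero]) outside the domain of [g] and
   [t + 1] for an answer [t] of [g]. The answer passed back cannot be bottom:
   otherwise the [C2] output [b] is fixed by a finite prefix of all-zero
   sequences, and enumerating [b] out of the [C2] instance after that prefix,
   while delaying the answers of [g] past it as well, forces the same, now wrong,
   output. So K0's query with [1] subtracted is a query to [g], and H0 applied
   to the shifted answer of [g] solves [f]. *)

(** * Primitive recursive machines *)

Definition implements (e : recf) (F : list nat -> nat) : Prop :=
  forall a, eval e a (F a) /\ forall v, eval e a v -> v = F a.

Lemma implements_ext e F G : implements e F -> (forall a, F a = G a) -> implements e G.
Proof. intros HF E a. rewrite <- E. apply HF. Qed.

Lemma eval_implements e F a v : implements e F -> eval e a v <-> v = F a.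
Proof. intros HF. split; [apply HF | intros ->; apply HF]. Qed.

Lemma implements_zero : implements RZero (fun _ => 0).
Proof. intros a; split; [constructor | intros v H; inversion H; auto]. Qed.

Lemma implements_succ : implements RSucc (fun a => S (nth 0 a 0)).
Proof.
  intros a; split.
  - replace (nth 0 a 0) with (hd 0 a) by (destruct a; reflexivity). constructor.
  - intros v H; inversion H; subst; destruct a; reflexivity.
Qed.

Lemma implements_proj i : implements (RProj i) (fun a => nth i a 0).
Proof. intros a; split; [constructor | intros v H; inversion H; auto]. Qed.

Lemma eval_comp_iff h gs a v :
  eval (RComp h gs) a v <-> exists bs, evals gs a bs /\ eval h bs v.
Proof.
  split; [intros H; inversion H; subst; eauto | intros (bs & Hg & Hh); econstructor; eauto].
Qed.

Lemma evals_nil_iff a bs : evals [] a bs <-> bs = [].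
Proof. split; [intros H; inversion H; auto | intros ->; constructor]. Qed.

Lemma evals_cons_iff g gs a bs :
  evals (g :: gs) a bs <-> exists v vs, bs = v :: vs /\ eval g a v /\ evals gs a vs.
Proof.
  split; [intros H; inversion H; subst; eauto | intros (v & vs & -> & Hg & Hgs); constructor; auto].
Qed.

Lemma evals_implements gs Gs a bs :
  Forall2 implements gs Gs -> evals gs a bs <-> bs = map (fun G => G a) Gs.
Proof.
  intros HF; revert bs; induction HF as [|g G gs Gs Hg _ IH]; intros bs.
  - apply evals_nil_iff.
  - rewrite evals_cons_iff. setoid_rewrite IH. setoid_rewrite (eval_implements _ _ _ _ Hg).
    split; [intros (v & vs & -> & -> & ->); reflexivity |].
    intros ->. exists (G a), (map (fun G => G a) Gs). auto.
Qed.

Lemma eval_comp_implemented h gs Gs a v :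
  Forall2 implements gs Gs -> eval (RComp h gs) a v <-> eval h (map (fun G => G a) Gs) v.
Proof.
  intros HF. rewrite eval_comp_iff. setoid_rewrite (evals_implements _ _ _ _ HF).
  split; [intros (bs & -> & Hh) | intros Hh]; eauto.
Qed.

Lemma implements_comp h H gs Gs :
  implements h H -> Forall2 implements gs Gs ->
  implements (RComp h gs) (fun a => H (map (fun G => G a) Gs)).
Proof.
  intros Hh HF a. setoid_rewrite (eval_comp_implemented _ _ _ _ _ HF).
  apply Hh.
Qed.

Fixpoint primrec (B St : list nat -> nat) (n : nat) (rest : list nat) : nat :=
  match n with 0 => B rest | S m => St (m :: primrec B St m rest :: rest) end.

Lemma implements_prec b s B St :
  implements b B -> implements s St ->
  forall n rest, eval (RPrec b s) (n :: rest) (primrec B St n rest) /\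
    forall v, eval (RPrec b s) (n :: rest) v -> v = primrec B St n rest.
Proof.
  intros Hb Hs n rest; induction n as [|n IH]; split.
  - constructor. apply Hb.
  - intros v Hv; inversion Hv; subst. apply Hb; auto.
  - econstructor; [apply IH | apply Hs].
  - intros v Hv; inversion Hv; subst.
    match goal with H : eval (RPrec b s) (n :: rest) _ |- _ => apply (proj2 IH) in H; subst end.
    apply Hs; auto.
Qed.

(* [RPrec b s] has no value on the empty argument list, so it is only
   implemented once composed with a nonempty list of arguments. *)
Lemma implements_prec_comp b s B St g gs G Gs :
  implements b B -> implements s St -> Forall2 implements (g :: gs) (G :: Gs) ->
  implements (RComp (RPrec b s) (g :: gs))
    (fun a => primrec B St (G a) (map (fun G => G a) Gs)).
Proof.
  intros Hb Hs HF a. setoid_rewrite (eval_comp_implemented _ _ _ _ _ HF).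
  apply (implements_prec _ _ _ _ Hb Hs).
Qed.

Fixpoint rf_const k := match k with 0 => RZero | S k => RComp RSucc [rf_const k] end.

Lemma implements_const k : implements (rf_const k) (fun _ => k).
Proof.
  induction k as [|k IH]; [apply implements_zero |].
  eapply implements_ext.
  - apply implements_comp; [apply implements_succ | constructor; [exact IH | constructor]].
  - reflexivity.
Qed.

Create HintDb implements.

Ltac implements_tac :=
  lazymatch goal with
  | |- implements RZero _ => apply implements_zero
  | |- implements RSucc _ => apply implements_succ
  | |- implements (RProj _) _ => apply implements_proj
  | |- implements (rf_const _) _ => apply implements_const
  | |- implements (RComp (RPrec _ _) (_ :: _)) _ =>
      eapply implements_prec_comp; [implements_tac | implements_tac | implements_list_tac]
  | |- implements (RComp _ _) _ => eapply implements_comp; [implements_tac | implements_list_tac]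
  | |- implements _ _ => eauto with implements
  end
with implements_list_tac :=
  lazymatch goal with
  | |- Forall2 implements [] _ => apply Forall2_nil
  | |- Forall2 implements (_ :: _) _ => apply Forall2_cons; [implements_tac | implements_list_tac]
  end.

Ltac machine := eapply implements_ext; [implements_tac |]; intros a; cbn [map nth].

Ltac rewrite_comp :=
  match goal with |- context [eval (RComp _ ?gs) _ _] =>
    let HF := fresh "HF" in
    eassert (HF : Forall2 implements gs _) by implements_list_tac;
    rewrite (eval_comp_implemented _ _ _ _ _ HF); clear HF; cbn [map nth]
  end.

Definition rf_add := RComp (RPrec (RProj 0) (RComp RSucc [RProj 1])) [RProj 0; RProj 1].
Lemma implements_add : implements rf_add (fun a => nth 0 a 0 + nth 1 a 0).
Proof. unfold rf_add; machine. induction (nth 0 a 0); cbn [primrec nth map]; lia. Qed.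
#[local] Hint Resolve implements_add : implements.

Definition rf_mul := RComp (RPrec RZero (RComp rf_add [RProj 1; RProj 2])) [RProj 0; RProj 1].
Lemma implements_mul : implements rf_mul (fun a => nth 0 a 0 * nth 1 a 0).
Proof. unfold rf_mul; machine. induction (nth 0 a 0); cbn [primrec nth map]; lia. Qed.
#[local] Hint Resolve implements_mul : implements.

Definition rf_pred := RComp (RPrec RZero (RProj 0)) [RProj 0].
Lemma implements_pred : implements rf_pred (fun a => pred (nth 0 a 0)).
Proof. unfold rf_pred; machine. destruct (nth 0 a 0); reflexivity. Qed.
#[local] Hint Resolve implements_pred : implements.

Definition rf_sub := RComp (RPrec (RProj 0) (RComp rf_pred [RProj 1])) [RProj 1; RProj 0].
Lemma implements_sub : implements rf_sub (fun a => nth 0 a 0 - nth 1 a 0).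
Proof.
  unfold rf_sub; machine. generalize (nth 0 a 0) as x.
  induction (nth 1 a 0) as [|n IH]; intros x; cbn [primrec nth map]; [lia | rewrite IH; lia].
Qed.
#[local] Hint Resolve implements_sub : implements.

Definition rf_leb := RComp rf_sub [rf_const 1; rf_sub].
Lemma implements_leb : implements rf_leb (fun a => Nat.b2n (nth 0 a 0 <=? nth 1 a 0)).
Proof.
  unfold rf_leb; machine.
  destruct (Nat.leb_spec (nth 0 a 0) (nth 1 a 0)); cbn [Nat.b2n]; lia.
Qed.
#[local] Hint Resolve implements_leb : implements.

Definition rf_eqb := RComp rf_mul [rf_leb; RComp rf_leb [RProj 1; RProj 0]].
Lemma implements_eqb : implements rf_eqb (fun a => Nat.b2n (nth 0 a 0 =? nth 1 a 0)).
Proof.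
  unfold rf_eqb; machine. destruct (Nat.eqb_spec (nth 0 a 0) (nth 1 a 0)) as [E|E];
  [rewrite E, Nat.leb_refl; reflexivity |].
  destruct (Nat.leb_spec (nth 0 a 0) (nth 1 a 0)), (Nat.leb_spec (nth 1 a 0) (nth 0 a 0));
  cbn [Nat.b2n]; lia.
Qed.
#[local] Hint Resolve implements_eqb : implements.

(* [1 - x] tests [x] for zero. *)
Definition rf_cond :=
  RComp rf_add [RComp rf_mul [RComp rf_sub [rf_const 1; RComp rf_sub [rf_const 1; RProj 0]];
                              RProj 1];
                RComp rf_mul [RComp rf_sub [rf_const 1; RProj 0]; RProj 2]].
Lemma implements_cond :
  implements rf_cond (fun a => if nth 0 a 0 =? 0 then nth 2 a 0 else nth 1 a 0).
Proof. unfold rf_cond; machine. destruct (nth 0 a 0); simpl; lia. Qed.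
#[local] Hint Resolve implements_cond : implements.

Definition rf_even := RComp (RPrec (rf_const 1) (RComp rf_sub [rf_const 1; RProj 1])) [RProj 0].
Lemma implements_even : implements rf_even (fun a => Nat.b2n (Nat.even (nth 0 a 0))).
Proof.
  unfold rf_even; machine. induction (nth 0 a 0) as [|n IH]; cbn [primrec nth map]; [reflexivity |].
  rewrite IH, Nat.even_succ, <- Nat.negb_even. destruct (Nat.even n); reflexivity.
Qed.
#[local] Hint Resolve implements_even : implements.

Lemma div2_succ n : Nat.div2 (S n) = Nat.div2 n + (1 - Nat.b2n (Nat.even n)).
Proof.
  destruct (Nat.Even_or_Odd n) as [[j ->] | [j ->]].
  - rewrite Nat.even_mul, Nat.div2_succ_double, Nat.div2_double. simpl. lia.
  - replace (S (2 * j + 1)) with (2 * S j) by lia.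
    rewrite Nat.div2_double, Nat.add_1_r, Nat.div2_succ_double, Nat.even_succ, Nat.odd_mul.
    simpl. lia.
Qed.

Definition rf_div2 :=
  RComp (RPrec RZero (RComp rf_add [RProj 1; RComp rf_sub [rf_const 1; RComp rf_even [RProj 0]]]))
        [RProj 0].
Lemma implements_div2 : implements rf_div2 (fun a => Nat.div2 (nth 0 a 0)).
Proof.
  unfold rf_div2; machine. induction (nth 0 a 0) as [|n IH]; cbn [primrec nth map]; [reflexivity |].
  rewrite IH, div2_succ. reflexivity.
Qed.
#[local] Hint Resolve implements_div2 : implements.

(** * Arithmetic coding of finite sequences *)

Fixpoint tri s := match s with 0 => 0 | S m => tri m + S m end.

Definition rf_tri :=
  RComp (RPrec RZero (RComp rf_add [RProj 1; RComp RSucc [RProj 0]])) [RProj 0].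
Lemma implements_tri : implements rf_tri (fun a => tri (nth 0 a 0)).
Proof.
  unfold rf_tri; machine. induction (nth 0 a 0) as [|n IH]; cbn [primrec nth map]; [reflexivity|].
  rewrite IH. reflexivity.
Qed.
#[local] Hint Resolve implements_tri : implements.

Fixpoint tri_root z :=
  match z with 0 => 0 | S m => tri_root m + Nat.b2n (tri (S (tri_root m)) <=? S m) end.

Definition rf_tri_root :=
  RComp (RPrec RZero (RComp rf_add [RProj 1; RComp rf_leb [RComp rf_tri [RComp RSucc [RProj 1]];
                                                           RComp RSucc [RProj 0]]]))
        [RProj 0].
Lemma implements_tri_root : implements rf_tri_root (fun a => tri_root (nth 0 a 0)).
Proof.
  unfold rf_tri_root; machine.
  induction (nth 0 a 0) as [|n IH]; cbn [primrec nth map]; [reflexivity|].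
  rewrite IH. reflexivity.
Qed.
#[local] Hint Resolve implements_tri_root : implements.

Lemma cpair_tri x y : cpair x y = tri (x + y) + y.
Proof.
  assert (E : forall s, tri s * 2 = s * (s + 1)) by (induction s; simpl; nia).
  unfold cpair. rewrite <- E, Nat.div_mul by lia. reflexivity.
Qed.

Lemma tri_monotone s s' : s <= s' -> tri s <= tri s'.
Proof. induction 1; simpl; lia. Qed.

Lemma tri_root_spec z : tri (tri_root z) <= z < tri (S (tri_root z)).
Proof.
  induction z as [|z IH]; [simpl; lia |].
  cbn [tri_root]. destruct (Nat.leb_spec (tri (S (tri_root z))) (S z));
  rewrite ?Nat.add_0_r, ?Nat.add_1_r; cbn [tri Nat.b2n] in *; lia.
Qed.

Lemma tri_root_unique z s : tri s <= z < tri (S s) -> tri_root z = s.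
Proof.
  intros H. pose proof (tri_root_spec z).
  destruct (Nat.lt_trichotomy (tri_root z) s) as [L | [E | L]]; auto;
  apply tri_monotone in L; lia.
Qed.

Definition unpair_snd z := z - tri (tri_root z).
Definition unpair_fst z := tri_root z - unpair_snd z.

Lemma unpair_cpair x y : unpair_fst (cpair x y) = x /\ unpair_snd (cpair x y) = y.
Proof.
  rewrite cpair_tri. unfold unpair_fst, unpair_snd.
  rewrite (tri_root_unique _ (x + y)) by (simpl; lia). lia.
Qed.

Lemma unpair_fst_le z : unpair_fst z <= z.
Proof.
  unfold unpair_fst. pose proof (tri_root_spec z).
  assert (tri_root z <= tri (tri_root z)) by (induction (tri_root z); simpl; lia). lia.
Qed.

Definition rf_unpair_snd := RComp rf_sub [RProj 0; RComp rf_tri [rf_tri_root]].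
Lemma implements_unpair_snd : implements rf_unpair_snd (fun a => unpair_snd (nth 0 a 0)).
Proof. unfold rf_unpair_snd; machine. reflexivity. Qed.
#[local] Hint Resolve implements_unpair_snd : implements.

Definition rf_unpair_fst := RComp rf_sub [rf_tri_root; rf_unpair_snd].
Lemma implements_unpair_fst : implements rf_unpair_fst (fun a => unpair_fst (nth 0 a 0)).
Proof. unfold rf_unpair_fst; machine. reflexivity. Qed.
#[local] Hint Resolve implements_unpair_fst : implements.

Definition rf_cpair := RComp rf_add [RComp rf_tri [rf_add]; RProj 1].
Lemma implements_cpair : implements rf_cpair (fun a => cpair (nth 0 a 0) (nth 1 a 0)).
Proof. unfold rf_cpair; machine. symmetry. apply cpair_tri. Qed.
#[local] Hint Resolve implements_cpair : implements.

Definition code_hd c := unpair_fst (pred c).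
Definition code_tl c := unpair_snd (pred c).
Fixpoint code_skip i c := match i with 0 => c | S m => code_tl (code_skip m c) end.
Definition code_nth i c := code_hd (code_skip i c).
Fixpoint code_len_below m c :=
  match m with 0 => 0 | S m' => code_len_below m' c + if code_skip m' c =? 0 then 0 else 1 end.
(* Counting up to [c] suffices since [length l <= code l]. *)
Definition code_len c := code_len_below c c.

Definition rf_code_skip :=
  RComp (RPrec (RProj 0) (RComp rf_unpair_snd [RComp rf_pred [RProj 1]])) [RProj 0; RProj 1].
Lemma implements_code_skip : implements rf_code_skip (fun a => code_skip (nth 0 a 0) (nth 1 a 0)).
Proof.
  unfold rf_code_skip; machine.
  induction (nth 0 a 0) as [|n IH]; cbn [primrec nth map]; [reflexivity|].
  rewrite IH. reflexivity.
Qed.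
#[local] Hint Resolve implements_code_skip : implements.

Definition rf_code_nth := RComp rf_unpair_fst [RComp rf_pred [rf_code_skip]].
Lemma implements_code_nth : implements rf_code_nth (fun a => code_nth (nth 0 a 0) (nth 1 a 0)).
Proof. unfold rf_code_nth; machine. reflexivity. Qed.
#[local] Hint Resolve implements_code_nth : implements.

Definition rf_code_len :=
  RComp (RPrec RZero (RComp rf_add [RProj 1; RComp rf_cond [RComp rf_code_skip [RProj 0; RProj 2];
                                                            rf_const 1; RZero]]))
        [RProj 0; RProj 0].
Lemma implements_code_len : implements rf_code_len (fun a => code_len (nth 0 a 0)).
Proof.
  unfold rf_code_len; machine. unfold code_len. generalize (nth 0 a 0) at 2 4 as c.
  induction (nth 0 a 0) as [|n IH]; intros c; cbn [primrec nth map code_len_below]; [reflexivity|].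
  rewrite IH. reflexivity.
Qed.
#[local] Hint Resolve implements_code_len : implements.

Lemma code_hd_code l : code_hd (code l) = hd 0 l.
Proof. destruct l; [reflexivity | apply unpair_cpair]. Qed.

Lemma code_tl_code l : code_tl (code l) = code (tl l).
Proof. destruct l; [reflexivity | apply unpair_cpair]. Qed.

Lemma code_skip_code i l : code_skip i (code l) = code (skipn i l).
Proof.
  revert l; induction i as [|i IH]; intros l; [reflexivity |].
  cbn [code_skip]. rewrite IH, code_tl_code. f_equal.
  clear IH; revert l; induction i as [|i IH]; intros [|x l]; try reflexivity. apply IH.
Qed.

Lemma code_nth_code i l : code_nth i (code l) = nth i l 0.
Proof.
  unfold code_nth. rewrite code_skip_code, code_hd_code.
  replace (nth i l 0) with (nth 0 (skipn i l) 0) by (rewrite nth_skipn; f_equal; lia).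
  destruct (skipn i l); reflexivity.
Qed.

Lemma length_le_code l : length l <= code l.
Proof. induction l; cbn [code length]; [lia | rewrite cpair_tri; lia]. Qed.

Lemma code_len_code l : code_len (code l) = length l.
Proof.
  assert (Hbelow : forall m, code_len_below m (code l) = Nat.min m (length l)).
  { induction m as [|m IH]; [reflexivity |]. cbn [code_len_below]. rewrite IH, code_skip_code.
    destruct (Nat.lt_ge_cases m (length l)) as [L | L].
    - destruct (skipn m l) eqn:E.
      + apply (f_equal (@length nat)) in E. rewrite length_skipn in E. simpl in E. lia.
      + cbn [code Nat.eqb]. lia.
    - rewrite skipn_all2 by exact L. cbn [code Nat.eqb]. lia. }
  unfold code_len. rewrite Hbelow. pose proof (length_le_code l). lia.
Qed.

Lemma code_nth_le i c : code_nth i c <= c.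
Proof.
  assert (Hskip : code_skip i c <= c).
  { induction i as [|i IH]; simpl; [lia |]. unfold code_tl, unpair_snd. lia. }
  unfold code_nth, code_hd. pose proof (unpair_fst_le (pred (code_skip i c))). lia.
Qed.

Lemma code_len_prefix p k : code_len (code (prefix p k)) = k.
Proof. rewrite code_len_code. unfold prefix. rewrite length_map, length_seq. reflexivity. Qed.

Lemma code_nth_prefix p k i : i < k -> code_nth i (code (prefix p k)) = p i.
Proof.
  intros H. rewrite code_nth_code. unfold prefix.
  rewrite nth_indep with (d' := p 0) by (rewrite length_map, length_seq; auto).
  rewrite map_nth, seq_nth; auto.
Qed.

Definition rf_tabulate fe :=
  RComp (RPrec RZero (RComp RSucc [RComp rf_cpair
           [RComp fe [RComp rf_sub [RComp rf_pred [RProj 2]; RProj 0]; RProj 3]; RProj 1]]))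
        [RProj 0; RProj 0; RProj 1].

Lemma implements_tabulate fe F :
  implements fe (fun a => F (nth 0 a 0) (nth 1 a 0)) ->
  implements (rf_tabulate fe) (fun a => code (map (fun i => F i (nth 1 a 0)) (seq 0 (nth 0 a 0)))).
Proof.
  intros HF. unfold rf_tabulate; machine. set (j := nth 0 a 0). set (c := nth 1 a 0).
  (* the recursion builds the code of the list from its last entry backwards *)
  enough (E : forall t, t <= j ->
    primrec _ _ t [j; c] = code (map (fun i => F i c) (seq (j - t) t)))
    by (rewrite E, Nat.sub_diag by lia; reflexivity).
  induction t as [|t IH]; intros Ht; [reflexivity |].
  cbn [primrec nth map]. rewrite IH by lia.
  replace (j - t) with (S (j - S t)) by lia. cbn [seq map code].
  replace (Nat.pred j - t) with (j - S t) by lia. reflexivity.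
Qed.
#[local] Hint Resolve implements_tabulate : implements.

(** * Digitwise computable transformations *)

Definition zero : baire := fun _ => 0.
Definition bsucc (t : baire) : baire := fun n => S (t n).

Lemma bfst_bpair p q : bfst (bpair p q) = p.
Proof.
  apply functional_extensionality. intros n. unfold bfst, bpair.
  rewrite Nat.even_even, Nat.div2_double. reflexivity.
Qed.

Lemma bsnd_bpair p q : bsnd (bpair p q) = q.
Proof.
  apply functional_extensionality. intros n. unfold bsnd, bpair.
  rewrite Nat.even_odd, Nat.div2_odd'. reflexivity.
Qed.

(* [zero] enumerates nothing, so [full_pair p] names [(x, {0,1})] whenever [p]
   names [x]. *)
Definition full_pair (p : baire) : baire := bpair p zero.
Definition transfer_pair (z : baire) : baire := bpair (full_pair (bfst z)) (bsucc (bsnd z)).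

Definition digitwise (F : nat -> nat -> nat) (T : baire -> baire) : Prop :=
  forall z k i, i < k -> F i (code (prefix z k)) = T z i.

Definition digit_computable (T : baire -> baire) : Prop :=
  exists fe F, implements fe (fun a => F (nth 0 a 0) (nth 1 a 0)) /\ digitwise F T.

Lemma code_prefix_digitwise F T z k j :
  digitwise F T -> j <= k ->
  code (map (fun i => F i (code (prefix z k))) (seq 0 j)) = code (prefix (T z) j).
Proof.
  intros HT Hj. unfold prefix. f_equal. apply map_ext_in.
  intros i Hi. apply in_seq in Hi. apply HT. lia.
Qed.

Lemma div2_le i : Nat.div2 i <= i.
Proof. pose proof (Nat.div2_odd i). lia. Qed.

Lemma digit_computable_bsucc : digit_computable bsucc.
Proof.
  exists (RComp RSucc [rf_code_nth]), (fun i c => S (code_nth i c)). split.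
  - machine. reflexivity.
  - intros z k i Hi. unfold bsucc. rewrite code_nth_prefix by exact Hi. reflexivity.
Qed.

Lemma digit_computable_full_pair : digit_computable full_pair.
Proof.
  exists (RComp rf_cond [rf_even; RComp rf_code_nth [rf_div2; RProj 1]; RZero]),
    (fun i c => if Nat.even i then code_nth (Nat.div2 i) c else 0). split.
  - machine.
    destruct (Nat.even (nth 0 a 0)); reflexivity.
  - intros z k i Hi. unfold full_pair, bpair, zero. pose proof (div2_le i).
    destruct (Nat.even i); [apply code_nth_prefix; lia | reflexivity].
Qed.

Lemma digit_computable_transfer_pair : digit_computable transfer_pair.
Proof.
  set (fe := RComp rf_cond
    [rf_even;
     RComp rf_cond [RComp rf_even [rf_div2];
                    RComp rf_code_nth [RComp rf_mul [rf_const 2; RComp rf_div2 [rf_div2]]; RProj 1];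
                    RZero];
     RComp RSucc [RComp rf_code_nth [RComp RSucc [RComp rf_mul [rf_const 2; rf_div2]]; RProj 1]]]).
  exists fe, (fun i c => if Nat.even i
    then (if Nat.even (Nat.div2 i) then code_nth (2 * Nat.div2 (Nat.div2 i)) c else 0)
    else S (code_nth (S (2 * Nat.div2 i)) c)). split.
  - unfold fe; machine.
    destruct (Nat.even (nth 0 a 0)), (Nat.even (Nat.div2 (nth 0 a 0))); reflexivity.
  - intros z k i Hi. unfold transfer_pair, full_pair, bpair, bfst, bsnd, bsucc, zero.
    pose proof (Nat.div2_odd i) as Ei. pose proof (Nat.div2_odd (Nat.div2 i)).
    rewrite <- Nat.negb_odd. destruct (Nat.odd i) eqn:Hodd; cbn [negb Nat.b2n] in *.
    + rewrite code_nth_prefix by lia. do 2 f_equal. lia.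
    + destruct (Nat.even (Nat.div2 i)); [apply code_nth_prefix; lia | reflexivity].
Qed.

Definition bfst_comp (H0 : baire -> baire -> Prop) (T : baire -> baire) : baire -> baire -> Prop :=
  fun z q => exists q0, H0 (T z) q0 /\ q = bfst q0.

Lemma computable_bfst_comp H0 T :
  computable H0 -> digit_computable T -> computable (bfst_comp H0 T).
Proof.
  intros [e He] (fe & F & HF & HT).
  set (e' := RComp e [RComp rf_mul [rf_const 2; RProj 0];
                      RComp (rf_tabulate fe) [RComp rf_code_len [RProj 1]; RProj 1]]).
  assert (E : forall z n k v,
    eval e' [n; code (prefix z k)] v <-> eval e [2 * n; code (prefix (T z) k)] v).
  { intros z n k v. unfold e'. rewrite_comp.
    rewrite code_len_prefix, (code_prefix_digitwise F T) by auto. reflexivity. }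
  exists e'. intros z q [q0 [Hq ->]] n. split.
  - destruct (proj1 (He _ _ Hq (2 * n))) as [k Hk]. exists k. apply E, Hk.
  - intros k v Hv. apply E in Hv. exact (proj2 (He _ _ Hq (2 * n)) k v Hv).
Qed.

(** * The operation [p - 1] *)

Lemma cnt_monotone r a b : a <= b -> cnt r a <= cnt r b.
Proof. induction 1; simpl; lia. Qed.

Lemma cnt_succ_nonzero r a : r a <> 0 -> cnt r (S a) = S (cnt r a).
Proof. intros H. simpl. destruct (Nat.eqb_spec (r a) 0); [contradiction | lia]. Qed.

Lemma minus1_digit r q M n v : minus1 r q -> r M = S v -> cnt r M = n -> v = q n.
Proof.
  intros Hm HM Hc. destruct (Hm n) as [k [Hk Hck]].
  destruct (Nat.lt_trichotomy M k) as [L | [-> | L]]; [| congruence |];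
  [pose proof (cnt_monotone r (S M) k L) | pose proof (cnt_monotone r (S k) M L)];
  rewrite cnt_succ_nonzero in * by congruence; lia.
Qed.

Lemma minus1_unique p q q' : minus1 p q -> minus1 p q' -> q = q'.
Proof.
  intros H H'. apply functional_extensionality. intros n.
  destruct (H n) as [k [Hk Hc]]. exact (minus1_digit p q' k n (q n) H' Hk Hc).
Qed.

Lemma not_minus1_zero q : ~ minus1 zero q.
Proof. intros H. destruct (H 0) as [k [Hk _]]. discriminate. Qed.

Lemma finite_choice (P : nat -> nat -> Prop) M :
  (forall m, m <= M -> exists j, P m j) ->
  exists L, length L = S M /\ forall m, m <= M -> P m (nth m L 0).
Proof.
  induction M as [|M IH]; intros H.
  - destruct (H 0 (le_n 0)) as [j Hj]. exists [j]. split; [reflexivity |].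
    intros m Hm. inversion Hm; subst. exact Hj.
  - destruct IH as [L [HL HP]]; [intros m Hm; apply H; lia |].
    destruct (H (S M) (le_n _)) as [j Hj]. exists (L ++ [j]).
    rewrite length_app, HL. split; [simpl; lia |].
    intros m Hm. destruct (Nat.eq_dec m (S M)) as [-> | Hne].
    + rewrite app_nth2, HL, Nat.sub_diag by lia. exact Hj.
    + rewrite app_nth1 by lia. apply HP. lia.
Qed.

(* A counter in state [S m] has seen [m] nonzero answers; state [0] records
   that some query received no answer. *)
Definition count_step (u w : nat) : nat :=
  match u, w with S m, S v => S (m + if v =? 0 then 0 else 1) | _, _ => 0 end.

Definition rf_count_step :=
  RComp rf_cond [RComp rf_mul [RProj 0; RProj 1];
                 RComp rf_add [RProj 0; RComp rf_cond [RComp rf_pred [RProj 1]; rf_const 1; RZero]];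
                 RZero].
Lemma implements_count_step :
  implements rf_count_step (fun a => count_step (nth 0 a 0) (nth 1 a 0)).
Proof.
  unfold rf_count_step; machine.
  destruct (nth 0 a 0) as [|m], (nth 1 a 0) as [|[|v]]; simpl; rewrite ?Nat.mul_0_r; reflexivity.
Qed.

Definition count_final (n s w : nat) : nat := if (s =? S n) && (2 <=? w) then pred w else 0.

Definition rf_count_final :=
  RComp rf_mul [RComp rf_mul [RComp rf_eqb [RProj 1; RComp RSucc [RProj 0]];
                              RComp rf_leb [rf_const 2; RProj 2]];
                RComp rf_pred [RProj 2]].
Lemma implements_count_final :
  implements rf_count_final (fun a => count_final (nth 0 a 0) (nth 1 a 0) (nth 2 a 0)).
Proof.
  unfold rf_count_final; machine. unfold count_final.
  destruct (_ =? _), (_ <=? _); cbn [andb Nat.b2n]; lia.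
Qed.

(* Instead of searching for prefixes long enough to answer each query, the
   machine reads the length of its input prefix [c] as the code of the list of
   prefix lengths to use; some length encodes good choices, and every length
   gives correct answers. *)
Definition query (e : recf) (F : nat -> nat -> nat) (t c v : nat) : Prop :=
  eval e [t; code (map (fun i => F i c) (seq 0 (code_nth t (code_len c))))] v.

Definition rf_query e fe x c :=
  RComp e [x; RComp (rf_tabulate fe) [RComp rf_code_nth [x; RComp rf_code_len [c]]; c]].

Section Query.
Variables (e fe : recf) (F : nat -> nat -> nat).
Hypothesis HF : implements fe (fun a => F (nth 0 a 0) (nth 1 a 0)).

Lemma eval_query x X c C a v :
  implements x X -> implements c C -> eval (rf_query e fe x c) a v <-> query e F (X a) (C a) v.
Proof. intros HX HC. unfold rf_query. rewrite_comp. reflexivity. Qed.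

Lemma query_prefix T t z k v :
  digitwise F T ->
  query e F t (code (prefix z k)) v <-> eval e [t; code (prefix (T z) (code_nth t k))] v.
Proof.
  intros HT. unfold query.
  rewrite code_len_prefix, (code_prefix_digitwise F T) by auto using code_nth_le.
  reflexivity.
Qed.

Definition rf_count_loop :=
  RPrec (rf_const 1) (RComp rf_count_step [RProj 1; rf_query e fe (RProj 0) (RProj 2)]).

Lemma eval_count_loop_0 c s : eval rf_count_loop [0; c] s <-> s = 1.
Proof.
  split; [intros H; inversion H; subst;
    match goal with Hb : eval _ [c] _ |- _ => exact (proj2 (implements_const 1 _) _ Hb) end |].
  intros ->. constructor. apply implements_const.
Qed.

Lemma eval_count_loop_S t c s :
  eval rf_count_loop [S t; c] s <->
  exists u w, eval rf_count_loop [t; c] u /\ query e F t c w /\ s = count_step u w.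
Proof.
  assert (Hstep : forall u v,
    eval (RComp rf_count_step [RProj 1; rf_query e fe (RProj 0) (RProj 2)]) [t; u; c] v <->
    exists w, query e F t c w /\ v = count_step u w).
  { intros u v. rewrite eval_comp_iff.
    do 2 setoid_rewrite evals_cons_iff. setoid_rewrite evals_nil_iff.
    setoid_rewrite (eval_implements _ _ _ _ (implements_proj 1)).
    setoid_rewrite (eval_query (RProj 0) _ (RProj 2) _ _ _ (implements_proj 0) (implements_proj 2)).
    setoid_rewrite (eval_implements _ _ _ _ implements_count_step). cbn [nth].
    split.
    - intros (bs & (v1 & vs & -> & -> & w & vs' & -> & Hw & ->) & ->). eauto.
    - intros (w & Hw & ->). exists [u; w]. split; [| reflexivity].
      exists u, [w]. split; [reflexivity |]. split; [reflexivity |]. exists w, []. auto. }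
  split.
  - intros H; inversion H; subst.
    match goal with Hs : eval (RComp rf_count_step _) _ _ |- _ =>
      apply Hstep in Hs as (w & Hw & ->) end. eauto.
  - intros (u & w & Hu & Hw & ->). econstructor; [exact Hu |]. apply Hstep. eauto.
Qed.

Lemma count_loop_sound c r :
  (forall t w, query e F t c (S w) -> w = r t) ->
  forall t s, eval rf_count_loop [t; c] s -> s = 0 \/ s = S (cnt r t).
Proof.
  intros Hok t; induction t as [|t IH]; intros s H.
  - apply eval_count_loop_0 in H. auto.
  - apply eval_count_loop_S in H as (u & w & Hu & Hw & ->).
    destruct (IH u Hu) as [-> | ->]; [left; reflexivity |].
    destruct w as [|w]; [left; reflexivity |].
    right. rewrite (Hok _ _ Hw). reflexivity.
Qed.

Lemma count_loop_complete c r T :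
  (forall t, t < T -> query e F t c (S (r t))) -> eval rf_count_loop [T; c] (S (cnt r T)).
Proof.
  induction T as [|T IH]; intros H; [apply eval_count_loop_0; reflexivity |].
  apply eval_count_loop_S. exists (S (cnt r T)), (S (r T)).
  split; [apply IH; intros; apply H; lia |]. split; [apply H; lia | reflexivity].
Qed.

Definition last_query c := pred (code_len (code_len c)).

Definition rf_last_query := RComp rf_pred [RComp rf_code_len [RComp rf_code_len [RProj 1]]].

Definition rf_minus1_comp :=
  RComp rf_count_final [RProj 0; RComp rf_count_loop [rf_last_query; RProj 1];
                        rf_query e fe rf_last_query (RProj 1)].

Lemma eval_minus1_comp n c v :
  eval rf_minus1_comp [n; c] v <->
  exists s w, eval rf_count_loop [last_query c; c] s /\ query e F (last_query c) c w /\
    v = count_final n s w.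
Proof.
  assert (Hlast : implements rf_last_query (fun a => last_query (nth 1 a 0)))
    by (unfold rf_last_query; machine; reflexivity).
  assert (Hargs : Forall2 implements [rf_last_query; RProj 1]
                    [fun a => last_query (nth 1 a 0); fun a => nth 1 a 0])
    by (constructor; [exact Hlast | constructor; [apply implements_proj | constructor]]).
  unfold rf_minus1_comp. rewrite eval_comp_iff.
  do 3 setoid_rewrite evals_cons_iff. setoid_rewrite evals_nil_iff.
  setoid_rewrite (eval_implements _ _ _ _ (implements_proj 0)).
  setoid_rewrite (eval_comp_implemented _ _ _ _ _ Hargs).
  setoid_rewrite (eval_query _ _ (RProj 1) _ _ _ Hlast (implements_proj 1)).
  setoid_rewrite (eval_implements _ _ _ _ implements_count_final). cbn [nth map].
  split.
  - intros (bs & (v1 & vs & -> & -> & s & vs' & -> & Hs & w & vs'' & -> & Hw & ->) & ->). eauto.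
  - intros (s & w & Hs & Hw & ->). exists [n; s; w]. split; [| reflexivity].
    exists n, [s; w]. do 2 (split; [reflexivity |]).
    exists s, [w]. do 2 (split; [reflexivity || exact Hs |]).
    exists w, []. auto.
Qed.
End Query.

Definition minus1_comp (K0 : baire -> baire -> Prop) (T : baire -> baire)
  : baire -> baire -> Prop :=
  fun p q => exists r, K0 (T p) r /\ minus1 r q.

Lemma computable_minus1_comp K0 T :
  computable K0 -> digit_computable T -> computable (minus1_comp K0 T).
Proof.
  intros [e He] (fe & F & HF & HT). exists (rf_minus1_comp e fe).
  intros p q [r [Hr Hm]] n.
  assert (Hquery : forall k t w,
    query e F t (code (prefix p k)) w <-> eval e [t; code (prefix (T p) (code_nth t k))] w)
    by (intros; apply (query_prefix e F T); exact HT).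
  split.
  - destruct (Hm n) as [M [HM HcM]].
    destruct (finite_choice (fun m j => eval e [m; code (prefix (T p) j)] (S (r m))) M)
      as [L [HL HP]]; [intros m _; apply (proj1 (He _ _ Hr m)) |].
    exists (code L).
    assert (Hlast : last_query (code (prefix p (code L))) = M)
      by (unfold last_query; rewrite code_len_prefix, code_len_code, HL; reflexivity).
    assert (Hq : forall t, t <= M -> query e F t (code (prefix p (code L))) (S (r t)))
      by (intros t Ht; apply Hquery; rewrite code_nth_code; apply HP, Ht).
    apply (eval_minus1_comp e fe F HF). rewrite Hlast.
    exists (S (cnt r M)), (S (r M)).
    split; [apply (count_loop_complete e fe F HF); intros; apply Hq; lia |].
    split; [apply Hq; lia |].
    unfold count_final. rewrite HcM, HM, Nat.eqb_refl. reflexivity.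
  - intros k v Hv. apply (eval_minus1_comp e fe F HF) in Hv as (s & w & Hs & Hw & Hv).
    assert (Hok : forall t w, query e F t (code (prefix p k)) (S w) -> w = r t)
      by (intros t w' H; apply Hquery in H; exact (proj2 (He _ _ Hr t) _ _ H)).
    unfold count_final in Hv.
    destruct (count_loop_sound e fe F HF _ r Hok _ _ Hs) as [-> | ->]; [discriminate |].
    destruct (Nat.eqb_spec (S (cnt r (last_query (code (prefix p k))))) (S n)) as [Hc |];
      [| discriminate].
    destruct w as [|[|w]]; [discriminate .. |]. cbn in Hv. injection Hv as ->.
    apply Hok in Hw. eapply minus1_digit; eauto.
Qed.

(** * Realizers of completed problems *)

Definition pad (k : nat) (w : baire) : baire := fun i => if i <? k then 0 else w (i - k).

Lemma pad_0 w : pad 0 w = w.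
Proof. apply functional_extensionality. intros i. unfold pad. simpl. f_equal. lia. Qed.

Lemma minus1_pad_bsucc k t : minus1 (pad k (bsucc t)) t.
Proof.
  assert (Hcnt : forall m, cnt (pad k (bsucc t)) (k + m) = m).
  { assert (Hlow : forall i, i <= k -> cnt (pad k (bsucc t)) i = 0).
    { induction i as [|i IH]; intros Hi; [reflexivity |]. cbn [cnt]. rewrite IH by lia.
      unfold pad. destruct (Nat.ltb_spec i k); [reflexivity | lia]. }
    induction m as [|m IH]; [rewrite Nat.add_0_r; apply Hlow; lia |].
    rewrite Nat.add_succ_r. cbn [cnt]. rewrite IH. unfold pad, bsucc.
    destruct (Nat.ltb_spec (k + m) k); [lia |]. simpl. lia. }
  intros n. exists (k + n). split; [| apply Hcnt].
  unfold pad, bsucc. destruct (Nat.ltb_spec (k + n) k); [lia |]. do 2 f_equal. lia.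
Qed.

Definition compl_realizer (G : baire -> baire -> Prop) (k : nat) : baire -> baire -> Prop :=
  fun z s => (exists q t, minus1 z q /\ G q t /\ s = pad k (bsucc t)) \/
             (~ (exists q t, minus1 z q /\ G q t) /\ s = zero).

Lemma compl_realizer_pfun G k : pfun G -> pfun (compl_realizer G k).
Proof.
  intros HG z s s' [(q & t & Hq & Ht & ->) | [N ->]] [(q' & t' & Hq' & Ht' & ->) | [N' ->]].
  - rewrite (minus1_unique _ _ _ Hq Hq') in Ht. rewrite (HG _ _ _ Ht Ht'). reflexivity.
  - exfalso. eauto.
  - exfalso. eauto.
  - reflexivity.
Qed.

Lemma compl_realizer_prefix_zero G k z s :
  compl_realizer G k z s -> forall i, i < k -> s i = 0.
Proof.
  intros [(q & t & _ & _ & ->) | [_ ->]] i Hi; [| reflexivity].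
  unfold pad. destruct (Nat.ltb_spec i k); [reflexivity | lia].
Qed.

Lemma compl_realizer_total (V : space) G k z :
  exists s (v : carrier (completion V)), compl_realizer G k z s /\ rep s v.
Proof.
  destruct (classic (exists q t, minus1 z q /\ G q t)) as [(q & t & Hq & Ht) | N].
  - exists (pad k (bsucc t)).
    destruct (classic (exists y : carrier V, rep t y)) as [[y Hy] | Ny].
    + exists (Some y). split; [left; eauto |]. exists t. split; [apply minus1_pad_bsucc | exact Hy].
    + exists None. split; [left; eauto |]. intros (q' & y & Hq' & Hy).
      rewrite <- (minus1_unique _ _ _ (minus1_pad_bsucc k t) Hq') in Hy. eauto.
  - exists zero, None. split; [right; auto |]. intros (q' & y & Hq' & _).
    exact (not_minus1_zero q' Hq').
Qed.

Lemma compl_realizer_realizes (U V : space) (g : problem U V) G k :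
  realizes g G -> realizes (compl_prob g) (compl_realizer G k).
Proof.
  intros HR z u Hz _.
  destruct u as [x |]; [destruct (classic (pdom g x)) as [Hx | Hx] |].
  - destruct Hz as (q & Hq & Hqx). destruct (HR q x Hqx Hx) as (t & y & Ht & Hty & Hg).
    exists (pad k (bsucc t)), (Some y). split; [left; eauto |]. split; [| simpl; eauto].
    exists t. split; [apply minus1_pad_bsucc | exact Hty].
  - destruct (compl_realizer_total V G k z) as (s & v & Hs & Hv).
    exists s, v. split; [exact Hs |]. split; [exact Hv |]. simpl. tauto.
  - destruct (compl_realizer_total V G k z) as (s & v & Hs & Hv). exists s, v. repeat split; auto.
Qed.

(** * Removing [C2] from the reduction *)

Lemma computable_continuous H p q n :
  computable H -> H p q ->
  exists k, forall p' q', H p' q' -> prefix p' k = prefix p k -> q' n = q n.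
Proof.
  intros [e He] Hpq. destruct (proj1 (He _ _ Hpq n)) as [k Hk].
  exists k. intros p' q' Hpq' Hpre. rewrite <- Hpre in Hk. symmetry.
  exact (proj2 (He _ _ Hpq' n) k (q n) Hk).
Qed.

(* Names the singleton [{negb b}]: its complement is enumerated at position [k]. *)
Definition singleton_name (k : nat) (b : bool) : baire :=
  fun i => if i =? k then (if b then 2 else 1) else 0.

Lemma singleton_name_rep k b : @rep Aminus2 (singleton_name k b) (b, negb b).
Proof.
  assert (Hk : forall m, m <> 0 ->
    (exists i, singleton_name k b i = m) <-> m = (if b then 2 else 1)).
  { intros m Hm. unfold singleton_name. split.
    - intros [i Hi]. destruct (i =? k); congruence.
    - intros ->. exists k. rewrite Nat.eqb_refl. reflexivity. }
  cbn [rep Aminus2 fst snd]. rewrite (Hk 1), (Hk 2) by discriminate.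
  destruct b; cbn [negb]; intuition congruence.
Qed.

Lemma singleton_name_prefix_zero k b i : i < k -> singleton_name k b i = 0.
Proof. intros Hi. unfold singleton_name. destruct (Nat.eqb_spec i k); [lia | reflexivity]. Qed.

Lemma full_pair_rep (X : space) p x :
  rep p x -> @rep (prod_space X Aminus2) (full_pair p) (x, (true, true)).
Proof.
  intros Hp. simpl. unfold full_pair. rewrite bfst_bpair, bsnd_bpair.
  split; [exact Hp |]. split; split; auto; intros _ [i Hi]; discriminate.
Qed.

Lemma bpair_rep (X : space) p x a (A : carrier Aminus2) :
  rep p x -> rep a A -> @rep (prod_space X Aminus2) (bpair p a) (x, A).
Proof. intros Hp Ha. simpl. rewrite bfst_bpair, bsnd_bpair. auto. Qed.

(* [comb p s] is the input of the outer reduction map: [bpair p s] for [W_le],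
   [s] for [sW_le]. *)
Section DropC2.
Variables (X Y U V : space) (f : problem X Y) (g : problem U V).
Variables (H0 K0 : baire -> baire -> Prop) (comb : baire -> baire -> baire) (T : baire -> baire).
Hypothesis H0_computable : computable H0.
Hypothesis reduction : forall G, pfun G -> realizes (compl_prob g) G ->
  realizes (prob_prod f C2) (fun p q => exists r s, K0 p r /\ G r s /\ H0 (comb p s) q).
Hypothesis comb_bsucc : forall p t, T (comb p t) = comb (full_pair p) (bsucc t).
Hypothesis comb_prefix_zero : forall p a s k,
  (forall i, i < k -> a i = 0) -> (forall i, i < k -> s i = 0) ->
  prefix (comb (bpair p a) s) k = prefix (comb (full_pair p) zero) k.

(* [H0] fixes its [C2] answer [b] after reading a finite prefix; enumerating [b]
   into the instance only after that prefix, while every answer of [g] is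
   delayed past it as well, yields the same, now wrong, answer. *)
Lemma bottom_answer_impossible G p x y q b :
  pfun G -> realizes g G -> rep p x -> f x y ->
  H0 (comb (full_pair p) zero) q -> @rep two_space (bsnd q) b -> False.
Proof.
  intros HG HR Hp Hxy Hq Hb.
  destruct (computable_continuous H0 _ _ 1 H0_computable Hq) as [k Hk].
  destruct (reduction (compl_realizer G k) (compl_realizer_pfun G k HG)
              (compl_realizer_realizes U V g G k HR) (bpair p (singleton_name k b)) (x, (b, negb b))
              (bpair_rep X _ _ _ _ Hp (singleton_name_rep k b)))
    as (q' & [y' b'] & (r & s & _ & Hs & Hq') & [_ Hb'] & [_ HC2]).
  { exists (y, negb b). split; [exact Hxy | destruct b; reflexivity]. }
  simpl in Hb, Hb'. unfold bsnd in Hb, Hb'. simpl in Hb, Hb'.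
  rewrite (Hk _ _ Hq') in Hb'
    by (apply comb_prefix_zero; [apply singleton_name_prefix_zero |
                                 exact (compl_realizer_prefix_zero _ _ _ _ Hs)]).
  rewrite Hb' in Hb.
  unfold C2 in HC2. destruct b, b'; simpl in *; congruence.
Qed.

Lemma drop_C2 : forall G, pfun G -> realizes g G ->
  realizes f (fun p q => exists r s,
    minus1_comp K0 full_pair p r /\ G r s /\ bfst_comp H0 T (comb p s) q).
Proof.
  intros G HG HR p x Hp [y0 Hy0].
  destruct (reduction (compl_realizer G 0) (compl_realizer_pfun G 0 HG)
              (compl_realizer_realizes U V g G 0 HR) (full_pair p) (x, (true, true))
              (full_pair_rep X p x Hp))
    as (q0 & [y b] & (r & s & Hr & [(q & t & Hq & Ht & ->) | [_ ->]] & Hh) & [Hy Hb] & [Hf _]).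
  { exists (y0, true). split; [exact Hy0 | reflexivity]. }
  - rewrite pad_0 in Hh. exists (bfst q0), y. split; [| auto].
    exists q, t. split; [exists r; auto |]. split; [exact Ht |].
    exists q0. rewrite comb_bsucc. auto.
  - exfalso. exact (bottom_answer_impossible G p x y0 q0 b HG HR Hp Hy0 Hh Hb).
Qed.
End DropC2.

Lemma transfer_pair_bpair p t : transfer_pair (bpair p t) = bpair (full_pair p) (bsucc t).
Proof. unfold transfer_pair. rewrite bfst_bpair, bsnd_bpair. reflexivity. Qed.

Lemma bpair_prefix_zero p a s k :
  (forall i, i < k -> a i = 0) -> (forall i, i < k -> s i = 0) ->
  prefix (bpair (bpair p a) s) k = prefix (bpair (full_pair p) zero) k.
Proof.
  intros Ha Hs. apply map_ext_in. intros i Hi. apply in_seq in Hi.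
  pose proof (div2_le i). pose proof (div2_le (Nat.div2 i)).
  unfold full_pair, bpair. destruct (Nat.even i); [destruct (Nat.even (Nat.div2 i)) |].
  - reflexivity.
  - rewrite Ha by lia. reflexivity.
  - rewrite Hs by lia. reflexivity.
Qed.

Lemma prefix_zero s k : (forall i, i < k -> s i = 0) -> prefix s k = prefix zero k.
Proof. intros Hs. apply map_ext_in. intros i Hi. apply in_seq in Hi. apply Hs. lia. Qed.

Theorem proposition10p3 (X Y U V : space) (f : problem X Y) (g : problem U V) :
  represented X -> represented Y -> represented U -> represented V ->
  (@W_le (prod_space X Aminus2) (prod_space Y two_space) (completion U) (completion V)
      (prob_prod f C2) (compl_prob g) -> W_le f g) /\
  (@sW_le (prod_space X Aminus2) (prod_space Y two_space) (completion U) (completion V)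
      (prob_prod f C2) (compl_prob g) -> sW_le f g).
Proof.
  (* The argument works for arbitrary representations. *)
  intros _ _ _ _. split; intros (H0 & K0 & HcH & HcK & Hred).
  - exists (bfst_comp H0 transfer_pair), (minus1_comp K0 full_pair). repeat split.
    + exact (computable_bfst_comp _ _ HcH digit_computable_transfer_pair).
    + exact (computable_minus1_comp _ _ HcK digit_computable_full_pair).
    + exact (drop_C2 X Y U V f g H0 K0 bpair transfer_pair HcH Hred
               transfer_pair_bpair bpair_prefix_zero).
  - exists (bfst_comp H0 bsucc), (minus1_comp K0 full_pair). repeat split.
    + exact (computable_bfst_comp _ _ HcH digit_computable_bsucc).
    + exact (computable_minus1_comp _ _ HcK digit_computable_full_pair).
    + exact (drop_C2 X Y U V f g H0 K0 (fun _ s => s) bsucc HcH Hred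
               (fun _ _ => eq_refl) (fun p a s k _ Hs => prefix_zero s k Hs)).
Qed.
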